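(* The class of $(\circ,\wedge,\mathsf{A})$-algebras that are completely representable by partial functions is not closed under subalgebras, not closed under directed unions, and not closed under homomorphic images. Consequently it is not axiomatisable by any universal first-order theory, nor by any universal-existential first-order theory, nor by any positive first-order theory.
   Context: A $(\circ,\wedge,\mathsf{A})$-algebra is a set with two binary operations $\circ,\wedge$ and one unary operation $\mathsf{A}$. An algebra of partial functions of this signature is a set of partial functions, with base $X$ the union of all their domains and ranges, closed under: composition $f\circ g=\{(x,z)\mid \exists y\,(x,y)\in f,(y,z)\in g\}$; intersection; antidomain $\mathsf{A}(f)=\{(x,x)\mid x\in X, x\notin\mathrm{dom}(f)\}$. A representation by partial functions is an isomorphism onto such an algebra. The order is $a\le b\iff a\wedge b=a$. A representation $\theta$ is complete if for every nonempty $S$ with $\bigwedge S$ existing, $\theta(\bigwedge S)=\bigcap\theta[S]$ (equivalently, for every $S$ with $\bigvee S$ existing, $\theta(\bigvee S)=\bigcup\theta[S]$). An algebra is completely representable if it has a complete representation. *)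

From Stdlib Require Import Arith.

Set Implicit Arguments.

Record algebra := Algebra {
  carrier :> Type;
  acomp : carrier -> carrier -> carrier;
  ameet : carrier -> carrier -> carrier;
  aant  : carrier -> carrier
}.

Definition ale (A : algebra) (a b : A) : Prop := ameet A a b = a.

Definition is_meet (A : algebra) (S : A -> Prop) (m : A) : Prop :=
  (forall s, S s -> ale A m s) /\
  (forall l, (forall s, S s -> ale A l s) -> ale A l m).

(* A representation over base X: an isomorphism theta onto an algebra of
   partial functions on X (relations X -> X -> Prop), where composition is
   f o g = {(x,z) | exists y, (x,y) in f, (y,z) in g}, meet is intersection,
   antidomain is A(f) = {(x,x) | x in X, x notin dom f}, and X is the union
   of all domains and ranges. *)
Record representation (A : algebra) (X : Type) := Representation {
  theta : A -> X -> X -> Prop;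
  theta_functional : forall a x y z, theta a x y -> theta a x z -> y = z;
  theta_injective : forall a b,
      (forall x y, theta a x y <-> theta b x y) -> a = b;
  theta_comp : forall a b x z,
      theta (acomp A a b) x z <-> exists y, theta a x y /\ theta b y z;
  theta_meet : forall a b x y,
      theta (ameet A a b) x y <-> theta a x y /\ theta b x y;
  theta_ant : forall a x y,
      theta (aant A a) x y <-> x = y /\ ~ (exists z, theta a x z);
  theta_base : forall x, exists a,
      (exists y, theta a x y) \/ (exists y, theta a y x)
}.

Definition complete_rep (A : algebra) (X : Type) (r : representation A X) : Prop :=
  forall (S : A -> Prop), (exists s, S s) ->
  forall m, is_meet A S m ->
  forall x y, theta r m x y <-> (forall s, S s -> theta r s x y).

Definition completely_representable (A : algebra) : Prop :=
  exists (X : Type) (r : representation A X), complete_rep r.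

Record subalg (B : algebra) := Subalg {
  sub_pred : B -> Prop;
  sub_comp : forall a b, sub_pred a -> sub_pred b -> sub_pred (acomp B a b);
  sub_meet : forall a b, sub_pred a -> sub_pred b -> sub_pred (ameet B a b);
  sub_ant  : forall a, sub_pred a -> sub_pred (aant B a)
}.

Definition sub_algebra (B : algebra) (S : subalg B) : algebra :=
  {| carrier := { x : B | sub_pred S x };
     acomp := fun a b => exist _ (acomp B (proj1_sig a) (proj1_sig b))
                          (sub_comp S _ _ (proj2_sig a) (proj2_sig b));
     ameet := fun a b => exist _ (ameet B (proj1_sig a) (proj1_sig b))
                          (sub_meet S _ _ (proj2_sig a) (proj2_sig b));
     aant := fun a => exist _ (aant B (proj1_sig a)) (sub_ant S _ (proj2_sig a)) |}.

Definition directed_union_of (B : algebra) (I : Type) (F : I -> subalg B) : Prop :=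
  (exists i : I, True) /\
  (forall i j, exists k, (forall x, sub_pred (F i) x -> sub_pred (F k) x) /\
                         (forall x, sub_pred (F j) x -> sub_pred (F k) x)) /\
  (forall x : B, exists i, sub_pred (F i) x).

Definition is_hom (A B : algebra) (h : A -> B) : Prop :=
  (forall a b, h (acomp A a b) = acomp B (h a) (h b)) /\
  (forall a b, h (ameet A a b) = ameet B (h a) (h b)) /\
  (forall a, h (aant A a) = aant B (h a)).

Definition surjective (A B : Type) (h : A -> B) : Prop :=
  forall b, exists a, h a = b.

Inductive term : Type :=
| tvar  : nat -> term
| tcomp : term -> term -> term
| tmeet : term -> term -> term
| tant  : term -> term.

Fixpoint teval (A : algebra) (v : nat -> A) (t : term) : A :=
  match t with
  | tvar n => v n
  | tcomp t1 t2 => acomp A (teval A v t1) (teval A v t2)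
  | tmeet t1 t2 => ameet A (teval A v t1) (teval A v t2)
  | tant t1 => aant A (teval A v t1)
  end.

Inductive formula : Type :=
| FTrue  : formula
| FFalse : formula
| FEq    : term -> term -> formula
| FNot   : formula -> formula
| FAnd   : formula -> formula -> formula
| FOr    : formula -> formula -> formula
| FImp   : formula -> formula -> formula
| FAll   : nat -> formula -> formula
| FEx    : nat -> formula -> formula.

Definition upd (A : Type) (v : nat -> A) (n : nat) (a : A) : nat -> A :=
  fun m => if Nat.eqb m n then a else v m.

Fixpoint sat (A : algebra) (v : nat -> A) (f : formula) : Prop :=
  match f with
  | FTrue => True
  | FFalse => False
  | FEq t1 t2 => teval A v t1 = teval A v t2
  | FNot g => ~ sat A v g
  | FAnd g h => sat A v g /\ sat A v h
  | FOr g h => sat A v g \/ sat A v h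
  | FImp g h => sat A v g -> sat A v h
  | FAll n g => forall a : A, sat A (upd v n a) g
  | FEx n g => exists a : A, sat A (upd v n a) g
  end.

Fixpoint qfree (f : formula) : Prop :=
  match f with
  | FTrue | FFalse | FEq _ _ => True
  | FNot g => qfree g
  | FAnd g h | FOr g h | FImp g h => qfree g /\ qfree h
  | FAll _ _ | FEx _ _ => False
  end.

Inductive universal : formula -> Prop :=
| univ_qf : forall f, qfree f -> universal f
| univ_all : forall n f, universal f -> universal (FAll n f).

Inductive existential : formula -> Prop :=
| ex_qf : forall f, qfree f -> existential f
| ex_ex : forall n f, existential f -> existential (FEx n f).

Inductive univ_exist : formula -> Prop :=
| ae_ex : forall f, existential f -> univ_exist f
| ae_all : forall n f, univ_exist f -> univ_exist (FAll n f).

Inductive positive : formula -> Prop :=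
| pos_true : positive FTrue
| pos_false : positive FFalse
| pos_eq : forall t1 t2, positive (FEq t1 t2)
| pos_and : forall f g, positive f -> positive g -> positive (FAnd f g)
| pos_or : forall f g, positive f -> positive g -> positive (FOr f g)
| pos_all : forall n f, positive f -> positive (FAll n f)
| pos_ex : forall n f, positive f -> positive (FEx n f).

(* A is a model of theory T (free variables read universally, i.e. each
   formula is taken as its universal closure) *)
Definition models (A : algebra) (T : formula -> Prop) : Prop :=
  forall f, T f -> forall v : nat -> A, sat A v f.

Definition axiomatises (T : formula -> Prop) (K : algebra -> Prop) : Prop :=
  forall A : algebra, K A <-> models A T.

From Stdlib Require Import Arith List Lia Classical FunctionalExtensionality
  PropExtensionality ProofIrrelevance ClassicalEpsilon.

Import ListNotations.

(* Read both composition and meet as intersection and antidomain as complement: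
   every field of sets is then an algebra of partial identities.  In any
   representation of such an algebra every element is a partial identity
   ([a = A (A a)]), so a complete representation exists when every point has a
   least neighbourhood, and cannot exist when every nonempty element splits: at
   a base point the elements containing it then have meet [0].  The clopen
   sets of Cantor space are of the second kind; they form a subalgebra of the
   full powerset, the directed union of the finite algebras of cylinders over
   the first [n] coordinates, and the image of the atomic algebra of
   prefix-determined sets of finite words under the map sending a set to the
   branches eventually in it.  Universal sentences pass to subalgebras,
   universal-existential ones to directed unions and positive ones to
   surjective images, so no such theory axiomatises the class. *)

Set Implicit Arguments.

Lemma pred_ext (Y : Type) (a b : Y -> Prop) : (forall u, a u <-> b u) -> a = b.
Proof. intro H. extensionality u. apply propositional_extensionality, H. Qed.

Lemma sig_ext (T : Type) (P : T -> Prop) (a b : {x | P x}) :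
  proj1_sig a = proj1_sig b -> a = b.
Proof. apply eq_sig_hprop; intros; apply proof_irrelevance. Qed.

Definition set_algebra (Y : Type) : algebra :=
  {| carrier := Y -> Prop;
     acomp := fun a b u => a u /\ b u;
     ameet := fun a b u => a u /\ b u;
     aant := fun a u => ~ a u |}.

Record set_embedding (A : algebra) (Y : Type) (mem : A -> Y -> Prop) : Prop := {
  mem_comp : forall a b u, mem (acomp A a b) u <-> mem a u /\ mem b u;
  mem_meet : forall a b u, mem (ameet A a b) u <-> mem a u /\ mem b u;
  mem_ant : forall a u, mem (aant A a) u <-> ~ mem a u;
  mem_inj : forall a b, (forall u, mem a u <-> mem b u) -> a = b }.

Lemma set_algebra_embedding (Y : Type) :
  set_embedding (set_algebra Y) (fun (a : set_algebra Y) u => a u).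
Proof. split; try (simpl; tauto). intros a b H; apply pred_ext, H. Qed.

Lemma subalgebra_embedding (B : algebra) (S : subalg B) (Y : Type) (mem : B -> Y -> Prop) :
  set_embedding B mem ->
  set_embedding (sub_algebra S) (fun (x : sub_algebra S) u => mem (proj1_sig x) u).
Proof.
  intro E; split; simpl; intros.
  - apply (mem_comp E).
  - apply (mem_meet E).
  - apply (mem_ant E).
  - apply sig_ext, (mem_inj E); assumption.
Qed.

Lemma theta_meet_ant (A : algebra) (X : Type) (r : representation A X) a x z :
  ~ theta r (ameet A a (aant A a)) x z.
Proof.
  intro H; apply (theta_meet r) in H as [Ha Hna].
  apply (theta_ant r) in Hna as [_ Hna]; apply Hna; exists z; exact Ha.
Qed.

Section SetEmbedding.

Variables (A : algebra) (Y : Type) (mem : A -> Y -> Prop).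
Hypothesis E : set_embedding A mem.

Lemma ale_mem a b : ale A a b <-> forall u, mem a u -> mem b u.
Proof.
  unfold ale; split.
  - intros Hab u Hu; rewrite <- Hab, (mem_meet E) in Hu; tauto.
  - intro H; apply (mem_inj E); intro u; rewrite (mem_meet E); firstorder.
Qed.

Definition ajoin a b := aant A (ameet A (aant A a) (aant A b)).

Lemma mem_join a b u : mem (ajoin a b) u <-> mem a u \/ mem b u.
Proof.
  unfold ajoin; rewrite (mem_ant E), (mem_meet E), !(mem_ant E).
  destruct (classic (mem a u)); tauto.
Qed.

Definition abot (a0 : A) := ameet A a0 (aant A a0).

Lemma mem_bot a0 u : ~ mem (abot a0) u.
Proof. unfold abot; rewrite (mem_meet E), (mem_ant E); tauto. Qed.

Definition diagonal_representation (cover : forall x, exists a, mem a x) :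
  representation A Y.
Proof.
  refine (@Representation A Y (fun a u v => u = v /\ mem a u) _ _ _ _ _ _).
  - intros a x y z [<- _] [<- _]; reflexivity.
  - intros a b H; apply (mem_inj E); intro u; specialize (H u u); tauto.
  - intros a b x z; rewrite (mem_comp E); split.
    + intros [<- Hab]; exists x; tauto.
    + intros [y [[<- ?] [<- ?]]]; tauto.
  - intros; rewrite (mem_meet E); tauto.
  - intros a x y; rewrite (mem_ant E); split.
    + intros [<- Hn]; split; [reflexivity | intros [z [<- Hz]]; tauto].
    + intros [<- Hn]; split; [reflexivity | intro Hx; apply Hn; exists x; tauto].
  - intro x; destruct (cover x) as [a Ha]; exists a; left; exists x; tauto.
Defined.

Definition least_neighbourhoods : Prop :=
  forall x : Y, exists e, mem e x /\ forall s u, mem s x -> mem e u -> mem s u.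

Definition splitting : Prop :=
  forall l u, mem l u -> exists l',
    (exists p, mem l p /\ mem l' p) /\ (exists q, mem l q /\ ~ mem l' q).

(* If every [s] in [S] contains [x], the join of [m] with the least
   neighbourhood of [x] is a lower bound of [S], hence lies below [m]. *)
Lemma completely_representable_of_least_neighbourhoods :
  least_neighbourhoods -> completely_representable A.
Proof.
  intro Hle.
  assert (cover : forall x, exists a, mem a x).
  { intro x; destruct (Hle x) as [e [Hex _]]; exists e; exact Hex. }
  exists Y, (diagonal_representation cover).
  intros S [s0 Hs0] m [Hlb Hglb] x y; cbn; split.
  - intros [<- Hm] s Hs; split; [reflexivity|].
    exact (proj1 (ale_mem m s) (Hlb s Hs) x Hm).
  - intro Hall; destruct (Hall s0 Hs0) as [<- _]; split; [reflexivity|].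
    destruct (Hle x) as [e [Hex He]].
    assert (Hjoin : ale A (ajoin e m) m).
    { apply Hglb; intros s Hs; apply ale_mem; intros u Hu.
      apply mem_join in Hu as [Heu|Hmu].
      - exact (He s u (proj2 (Hall s Hs)) Heu).
      - exact (proj1 (ale_mem m s) (Hlb s Hs) u Hmu). }
    apply (proj1 (ale_mem _ _) Hjoin), mem_join; left; exact Hex.
Qed.

(* Every element is a partial identity since [a = A (A a)]; so at a base
   point [x], each element or its antidomain contains [x], and splitting makes
   [abot a0] the meet of those containing [x]. *)
Lemma not_completely_representable_of_splitting (a0 : A) (y0 : Y) :
  splitting -> ~ completely_representable A.
Proof.
  intros Hsplit [X [r Hr]].
  assert (Hdiag : forall a u v, theta r a u v -> u = v).
  { intros a u v H.
    rewrite (mem_inj E a (aant A (aant A a))) in H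
      by (intro w; rewrite !(mem_ant E); split; [tauto | apply NNPP]).
    apply (theta_ant r) in H; tauto. }
  destruct (classic (inhabited X)) as [[x]|Hempty].
  2: { assert (Ha0 : a0 = aant A a0).
       { apply (theta_injective r); intro x; exfalso; exact (Hempty (inhabits x)). }
       pose proof (mem_ant E a0 y0) as H; rewrite <- Ha0 in H; tauto. }
  assert (Hmeet : is_meet A (fun s => theta r s x x) (abot a0)).
  { split.
    - intros s _; apply ale_mem; intros u Hu; exfalso; exact (mem_bot a0 Hu).
    - intros l Hl; apply ale_mem; intros u Hu; exfalso.
      destruct (Hsplit l u Hu) as [l' [[p [Hlp Hl'p]] [q [Hlq Hl'q]]]].
      destruct (classic (theta r l' x x)) as [Hin|Hout].
      + exact (Hl'q (proj1 (ale_mem l l') (Hl l' Hin) q Hlq)).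
      + assert (Hant : theta r (aant A l') x x).
        { apply (theta_ant r); split; [reflexivity|]; intros [w Hw].
          rewrite <- (Hdiag _ _ _ Hw) in Hw; exact (Hout Hw). }
        pose proof (proj1 (ale_mem _ _) (Hl _ Hant) p Hlp) as H.
        rewrite (mem_ant E) in H; exact (H Hl'p). }
  assert (Htop : theta r (aant A (abot a0)) x x).
  { apply (theta_ant r); split; [reflexivity|]; intros [z Hz].
    exact (theta_meet_ant r _ _ _ Hz). }
  apply (theta_meet_ant r a0 x x).
  apply (Hr _ (ex_intro (fun s => theta r s x x) _ Htop) _ Hmeet x x).
  intros s Hs; exact Hs.
Qed.

End SetEmbedding.


Fixpoint term_vars (t : term) : list nat :=
  match t with
  | tvar n => [n]
  | tcomp t1 t2 | tmeet t1 t2 => term_vars t1 ++ term_vars t2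
  | tant t1 => term_vars t1
  end.

Fixpoint formula_vars (f : formula) : list nat :=
  match f with
  | FTrue | FFalse => []
  | FEq t1 t2 => term_vars t1 ++ term_vars t2
  | FNot g => formula_vars g
  | FAnd g h | FOr g h | FImp g h => formula_vars g ++ formula_vars h
  | FAll n g | FEx n g => n :: formula_vars g
  end.

Lemma teval_agree (A : algebra) (v w : nat -> A) (t : term) :
  (forall k, In k (term_vars t) -> v k = w k) -> teval A v t = teval A w t.
Proof.
  induction t; simpl; intro H; f_equal;
    auto using in_or_app, in_eq.
Qed.

Lemma upd_agree (A : Type) (v w : nat -> A) n a (l : list nat) :
  (forall k, In k (n :: l) -> v k = w k) -> forall k, In k l -> upd v n a k = upd w n a k.
Proof. intros H k Hk; unfold upd; destruct (Nat.eqb k n); auto using in_cons. Qed.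

Lemma sat_agree (A : algebra) (f : formula) (v w : nat -> A) :
  (forall k, In k (formula_vars f) -> v k = w k) -> (sat A v f <-> sat A w f).
Proof.
  revert v w; induction f; simpl; intros v w H;
    try (rewrite (IHf1 v w), (IHf2 v w) by auto using in_or_app; tauto).
  - tauto.
  - tauto.
  - rewrite (teval_agree _ v w t), (teval_agree _ v w t0) by auto using in_or_app; tauto.
  - rewrite (IHf v w H); tauto.
  - split; intros Hf a; specialize (Hf a);
      rewrite (IHf (upd v n a) (upd w n a)) in *; eauto using upd_agree.
  - split; intros [a Hf]; exists a;
      rewrite (IHf (upd v n a) (upd w n a)) in *; eauto using upd_agree.
Qed.

Lemma upd_map (S T : Type) (g : S -> T) (v : nat -> S) n a :
  (fun k => g (upd v n a k)) = upd (fun k => g (v k)) n (g a).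
Proof. extensionality k; unfold upd; destruct (Nat.eqb k n); reflexivity. Qed.

Lemma upd_same (S : Type) (v : nat -> S) n : upd v n (v n) = v.
Proof. extensionality k; unfold upd; destruct (Nat.eqb_spec k n); congruence. Qed.

Section Homomorphism.

Variables (A B : algebra) (h : A -> B).
Hypothesis Hh : is_hom A B h.

Lemma teval_hom v t : h (teval A v t) = teval B (fun k => h (v k)) t.
Proof.
  destruct Hh as [Hc [Hm Ha]].
  induction t; simpl; rewrite ?Hc, ?Hm, ?Ha; congruence.
Qed.

Lemma sat_positive_hom (Hs : surjective h) f :
  positive f -> forall v, sat A v f -> sat B (fun k => h (v k)) f.
Proof.
  induction 1 as [| | t1 t2 | f g _ IHf _ IHg | f g _ IHf _ IHg | n f _ IHf | n f _ IHf];
    simpl; intros v Hv.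
  - exact I.
  - exact Hv.
  - rewrite <- !teval_hom; congruence.
  - split; [apply IHf | apply IHg]; apply Hv.
  - destruct Hv; [left; apply IHf | right; apply IHg]; assumption.
  - intro b; destruct (Hs b) as [a <-]; rewrite <- upd_map; apply IHf, Hv.
  - destruct Hv as [a Ha]; exists (h a); rewrite <- upd_map; apply IHf, Ha.
Qed.

Hypothesis h_inj : forall a b, h a = h b -> a = b.

Lemma sat_qfree_embedding f :
  qfree f -> forall v, sat A v f <-> sat B (fun k => h (v k)) f.
Proof.
  induction f; simpl; intros Hq v; try tauto.
  - rewrite <- !teval_hom; split; [congruence | apply h_inj].
  - rewrite (IHf Hq v); tauto.
  - rewrite (IHf1 (proj1 Hq) v), (IHf2 (proj2 Hq) v); tauto.
  - rewrite (IHf1 (proj1 Hq) v), (IHf2 (proj2 Hq) v); tauto.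
  - rewrite (IHf1 (proj1 Hq) v), (IHf2 (proj2 Hq) v); tauto.
Qed.

Lemma sat_universal_embedding f :
  universal f -> forall v, sat B (fun k => h (v k)) f -> sat A v f.
Proof.
  induction 1 as [f Hq | n f _ IH]; intros v Hv.
  - apply (sat_qfree_embedding _ Hq); exact Hv.
  - intro a; apply IH; rewrite upd_map; apply Hv.
Qed.

Lemma sat_existential_embedding f :
  existential f -> forall v, sat A v f -> sat B (fun k => h (v k)) f.
Proof.
  induction 1 as [f Hq | n f _ IH]; intros v Hv.
  - apply (sat_qfree_embedding _ Hq); exact Hv.
  - destruct Hv as [a Ha]; exists (h a); rewrite <- upd_map; apply IH, Ha.
Qed.

End Homomorphism.

Lemma proj1_sig_hom (B : algebra) (S : subalg B) :
  is_hom (sub_algebra S) B (@proj1_sig _ _).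
Proof. repeat split. Qed.

Lemma models_subalgebra (B : algebra) (S : subalg B) (T : formula -> Prop) :
  (forall f, T f -> universal f) -> models B T -> models (sub_algebra S) T.
Proof.
  intros HT HB f Hf v.
  apply (sat_universal_embedding (proj1_sig_hom S)); [exact (@sig_ext _ _) | auto | apply HB, Hf].
Qed.

Lemma models_surjective_image (A B : algebra) (h : A -> B) (T : formula -> Prop) :
  is_hom A B h -> surjective h -> (forall f, T f -> positive f) ->
  models A T -> models B T.
Proof.
  intros Hh Hs HT HA f Hf w.
  destruct (choice (fun k a => h a = w k) (fun k => Hs (w k))) as [v Hv].
  replace w with (fun k => h (v k)) by (extensionality k; apply Hv).
  apply (sat_positive_hom Hh Hs (HT f Hf)), HA, Hf.
Qed.

Section DirectedUnion.

Variables (B : algebra) (I : Type) (F : I -> subalg B).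
Hypothesis HF : directed_union_of F.

Lemma directed_union_cover (xs : list B) :
  exists i, forall x, In x xs -> sub_pred (F i) x.
Proof.
  destruct HF as [[i0 _] [Hdir Hcov]].
  induction xs as [|x xs [i Hi]]; [exists i0; intros x [] |].
  destruct (Hcov x) as [j Hj], (Hdir i j) as [k [Hik Hjk]].
  exists k; intros y [<- | Hy]; auto.
Qed.

Lemma subalgebra_valuation (S : subalg B) (w : nat -> B) (b : B) :
  sub_pred S b ->
  exists v : nat -> sub_algebra S, forall k, sub_pred S (w k) -> proj1_sig (v k) = w k.
Proof.
  intro Hb.
  exists (fun k => match excluded_middle_informative (sub_pred S (w k)) with
           | left p => exist (sub_pred S) (w k) p
           | right _ => exist (sub_pred S) b Hb end).
  intros k Hk; destruct (excluded_middle_informative _) as [p | np]; [reflexivity | contradiction].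
Qed.

Lemma sat_univ_exist_directed_union f :
  univ_exist f -> (forall i (v : nat -> sub_algebra (F i)), sat _ v f) ->
  forall w : nat -> B, sat B w f.
Proof.
  induction 1 as [f Hf | n f _ IH]; intros Hall w.
  - destruct (directed_union_cover (map w (0 :: formula_vars f))) as [i Hi].
    destruct (subalgebra_valuation (F i) w _ (Hi _ (in_eq _ _))) as [v Hv].
    apply (sat_agree _ f (fun k => proj1_sig (v k))).
    + intros k Hk; apply Hv, Hi, in_map, in_cons, Hk.
    + apply (sat_existential_embedding (proj1_sig_hom (F i)) (@sig_ext _ _) Hf), Hall.
  - intro b; apply IH; intros i v.
    rewrite <- (upd_same v n); apply (Hall i v).
Qed.

End DirectedUnion.

Lemma models_directed_union (B : algebra) (I : Type) (F : I -> subalg B)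
  (T : formula -> Prop) :
  directed_union_of F -> (forall f, T f -> univ_exist f) ->
  (forall i, models (sub_algebra (F i)) T) -> models B T.
Proof.
  intros HF HT Hmod f Hf.
  apply (sat_univ_exist_directed_union HF (HT f Hf)); intros i v; apply Hmod, Hf.
Qed.

Lemma set_algebra_completely_representable (Y : Type) :
  completely_representable (set_algebra Y).
Proof.
  apply (completely_representable_of_least_neighbourhoods (set_algebra_embedding Y)).
  intro x; exists (fun u => u = x); split; [reflexivity | intros s u Hs ->; exact Hs].
Qed.

Definition cantor := nat -> bool.

Definition depends_on (n : nat) (a : cantor -> Prop) : Prop :=
  forall f g : cantor, (forall i, i < n -> f i = g i) -> (a f <-> a g).

Definition clopen (a : cantor -> Prop) : Prop := exists n, depends_on n a.

Lemma depends_on_mono n m a : n <= m -> depends_on n a -> depends_on m a.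
Proof. intros Hnm H f g Hfg; apply H; intros i Hi; apply Hfg; lia. Qed.

Lemma depends_on_inter n a b :
  depends_on n a -> depends_on n b -> depends_on n (fun u => a u /\ b u).
Proof. intros Ha Hb f g H; rewrite (Ha f g H), (Hb f g H); tauto. Qed.

Lemma depends_on_compl n a : depends_on n a -> depends_on n (fun u => ~ a u).
Proof. intros Ha f g H; rewrite (Ha f g H); tauto. Qed.

Lemma clopen_inter a b : clopen a -> clopen b -> clopen (fun u => a u /\ b u).
Proof.
  intros [n Ha] [m Hb]; exists (max n m).
  apply depends_on_inter; [apply (depends_on_mono (n := n)) | apply (depends_on_mono (n := m))]; auto; lia.
Qed.

Definition clopen_subalg : subalg (set_algebra cantor).
Proof.
  refine (Subalg (set_algebra cantor) clopen _ _ _).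
  - exact clopen_inter.
  - exact clopen_inter.
  - intros a [n Hn]; exists n; exact (depends_on_compl Hn).
Defined.

Definition clopen_algebra : algebra := sub_algebra clopen_subalg.

Definition clopen_mem (a : clopen_algebra) (f : cantor) : Prop := proj1_sig a f.

Lemma clopen_embedding : set_embedding clopen_algebra clopen_mem.
Proof. exact (subalgebra_embedding clopen_subalg (set_algebra_embedding cantor)). Qed.

Definition flip (f : cantor) (n : nat) : cantor :=
  fun i => if Nat.eqb i n then negb (f n) else f i.

(* A clopen set depending on the first [n] coordinates is split by the coordinate [n]. *)
Lemma clopen_splitting : splitting clopen_algebra clopen_mem.
Proof.
  intros [l [n Hn]] f Hlf; unfold clopen_mem in *; simpl in *.
  assert (Hc : clopen (fun g => l g /\ g n = f n)).
  { apply clopen_inter; [exists n; exact Hn |].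
    exists (S n); intros g g' Hgg'; rewrite (Hgg' n) by lia; tauto. }
  exists (exist _ _ Hc); simpl; split.
  - exists f; tauto.
  - exists (flip f n); split.
    + apply (Hn f); [| exact Hlf].
      intros i Hi; unfold flip; destruct (Nat.eqb_spec i n); [lia | reflexivity].
    + unfold flip; rewrite Nat.eqb_refl; destruct (f n); intros [_ H]; discriminate.
Qed.

Lemma clopen_top : clopen (fun _ => True).
Proof. exists 0; intros f g _; tauto. Qed.

Lemma clopen_algebra_not_completely_representable :
  ~ completely_representable clopen_algebra.
Proof.
  exact (not_completely_representable_of_splitting clopen_embedding
           (exist _ _ clopen_top) (fun _ => true) clopen_splitting).
Qed.

Definition cylinder_subalg (n : nat) : subalg clopen_algebra.
Proof.
  refine (Subalg clopen_algebra (fun a => depends_on n (proj1_sig a)) _ _ _); simpl.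
  - intros a b; apply depends_on_inter.
  - intros a b; apply depends_on_inter.
  - intro a; apply depends_on_compl.
Defined.

Lemma cylinder_directed_union : directed_union_of cylinder_subalg.
Proof.
  split; [exists 0; exact I | split].
  - intros i j; exists (max i j); simpl.
    split; intros x; apply depends_on_mono; lia.
  - intros [x [n Hn]]; exists n; exact Hn.
Qed.

Lemma cylinder_completely_representable n :
  completely_representable (sub_algebra (cylinder_subalg n)).
Proof.
  apply (completely_representable_of_least_neighbourhoods
           (subalgebra_embedding (cylinder_subalg n) clopen_embedding)).
  intro x.
  assert (He : depends_on n (fun g => forall i, i < n -> g i = x i)).
  { intros f g H; split; intros H' i Hi; [rewrite <- H | rewrite H]; auto. }
  exists (exist _ (exist _ _ (ex_intro _ n He)) He); unfold clopen_mem; simpl.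
  split; [auto |].
  intros [[s Cs] Ds] u Hsx Hu; simpl in *; exact (proj2 (Ds u x Hu) Hsx).
Qed.

Definition prefix (f : cantor) (m : nat) : list bool := map f (seq 0 m).

Lemma prefix_length f m : length (prefix f m) = m.
Proof. unfold prefix; rewrite length_map, length_seq; reflexivity. Qed.

Lemma prefix_nth f m i : i < m -> nth i (prefix f m) false = f i.
Proof.
  intro Hi; unfold prefix.
  rewrite (nth_indep _ false (f 0)) by (rewrite length_map, length_seq; lia).
  rewrite map_nth, seq_nth by lia; reflexivity.
Qed.

Definition depends_on_prefix (n : nat) (a : list bool -> Prop) : Prop :=
  forall s t, n <= length s -> n <= length t ->
    (forall i, i < n -> nth i s false = nth i t false) -> (a s <-> a t).

Definition prefix_determined (a : list bool -> Prop) : Prop :=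
  exists n, depends_on_prefix n a.

Lemma depends_on_prefix_mono n m a :
  n <= m -> depends_on_prefix n a -> depends_on_prefix m a.
Proof. intros Hnm H s t Hs Ht Hst; apply H; try lia; intros i Hi; apply Hst; lia. Qed.

Lemma prefix_determined_inter a b :
  prefix_determined a -> prefix_determined b -> prefix_determined (fun u => a u /\ b u).
Proof.
  intros [n Ha] [m Hb]; exists (max n m).
  apply (depends_on_prefix_mono (Nat.le_max_l n m)) in Ha.
  apply (depends_on_prefix_mono (Nat.le_max_r n m)) in Hb.
  intros s t Hs Ht Hst; rewrite (Ha s t), (Hb s t); auto; tauto.
Qed.

Definition prefix_subalg : subalg (set_algebra (list bool)).
Proof.
  refine (Subalg (set_algebra (list bool)) prefix_determined _ _ _).
  - exact prefix_determined_inter.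
  - exact prefix_determined_inter.
  - intros a [n Hn]; exists n; intros s t Hs Ht Hst; simpl; rewrite (Hn s t); tauto.
Defined.

Definition prefix_algebra : algebra := sub_algebra prefix_subalg.

Lemma prefix_algebra_completely_representable : completely_representable prefix_algebra.
Proof.
  apply (completely_representable_of_least_neighbourhoods
           (subalgebra_embedding prefix_subalg (set_algebra_embedding (list bool)))).
  intro x.
  assert (Hx : prefix_determined (fun s => s = x)).
  { exists (S (length x)); intros s t Hs Ht _; split; intros ->; lia. }
  exists (exist _ _ Hx); simpl; split; [reflexivity | intros s u Hs ->; exact Hs].
Qed.

Definition limit_set (a : list bool -> Prop) (f : cantor) : Prop :=
  exists N, forall m, N <= m -> a (prefix f m).

Lemma depends_on_prefix_prefix n a f g m :
  depends_on_prefix n a -> n <= m -> (forall i, i < n -> f i = g i) ->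
  (a (prefix f m) <-> a (prefix g n)).
Proof.
  intros H Hm Hfg; apply H; rewrite ?prefix_length; auto.
  intros i Hi; rewrite !prefix_nth by lia; auto.
Qed.

Lemma limit_set_prefix n a f :
  depends_on_prefix n a -> (limit_set a f <-> a (prefix f n)).
Proof.
  intro H; split.
  - intros [N HN]; specialize (HN (max N n) (Nat.le_max_l N n)).
    rewrite (depends_on_prefix_prefix f f H) in HN; auto; lia.
  - intro Hf; exists n; intros m Hm; rewrite (depends_on_prefix_prefix f f H); auto.
Qed.

Lemma limit_set_inter a b f :
  limit_set (fun u => a u /\ b u) f <-> limit_set a f /\ limit_set b f.
Proof.
  split.
  - intros [N HN]; split; exists N; intros m Hm; apply HN, Hm.
  - intros [[N1 H1] [N2 H2]]; exists (max N1 N2); intros m Hm.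
    split; [apply H1 | apply H2]; lia.
Qed.

Lemma limit_set_clopen a : prefix_determined a -> clopen (limit_set a).
Proof.
  intros [n H]; exists n; intros f g Hfg.
  rewrite !(limit_set_prefix _ H), (depends_on_prefix_prefix f g H); auto; tauto.
Qed.

Definition limit_map (a : prefix_algebra) : clopen_algebra :=
  exist _ (limit_set (proj1_sig a)) (limit_set_clopen (proj2_sig a)).

Lemma limit_map_hom : is_hom prefix_algebra clopen_algebra limit_map.
Proof.
  split; [| split]; intros; apply sig_ext, pred_ext; intro f; simpl.
  - apply limit_set_inter.
  - apply limit_set_inter.
  - destruct a as [a [n Ha]]; simpl.
    assert (Hc : depends_on_prefix n (fun u => ~ a u)).
    { intros s t Hs Ht Hst; rewrite (Ha s t); tauto. }
    rewrite (limit_set_prefix _ Hc), (limit_set_prefix _ Ha); tauto.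
Qed.

Lemma limit_map_surjective : surjective limit_map.
Proof.
  intros [c [n Hc]].
  set (a := fun s : list bool => n <= length s /\ c (fun i => nth i s false)).
  assert (Ha : depends_on_prefix n a).
  { intros s t Hs Ht Hst; unfold a; rewrite (Hc _ _ Hst); tauto. }
  exists (exist prefix_determined a (ex_intro _ n Ha)).
  apply sig_ext, pred_ext; intro f; simpl.
  rewrite (limit_set_prefix _ Ha); unfold a; rewrite prefix_length.
  rewrite (Hc _ f) by (intros i Hi; apply prefix_nth, Hi); split; [tauto | auto].
Qed.

Lemma not_closed_under_subalgebras : exists (B : algebra) (S : subalg B),
  completely_representable B /\ ~ completely_representable (sub_algebra S).
Proof.
  exists (set_algebra cantor), clopen_subalg; split.
  - apply set_algebra_completely_representable.
  - exact clopen_algebra_not_completely_representable.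
Qed.

Lemma not_closed_under_directed_unions :
  exists (B : algebra) (I : Type) (F : I -> subalg B),
    directed_union_of F /\
    (forall i, completely_representable (sub_algebra (F i))) /\
    ~ completely_representable B.
Proof.
  exists clopen_algebra, nat, cylinder_subalg; split; [| split].
  - exact cylinder_directed_union.
  - exact cylinder_completely_representable.
  - exact clopen_algebra_not_completely_representable.
Qed.

Lemma not_closed_under_homomorphic_images : exists (A B : algebra) (h : A -> B),
  is_hom A B h /\ surjective h /\
  completely_representable A /\ ~ completely_representable B.
Proof.
  exists prefix_algebra, clopen_algebra, limit_map; split; [| split; [| split]].
  - exact limit_map_hom.
  - exact limit_map_surjective.
  - exact prefix_algebra_completely_representable.
  - exact clopen_algebra_not_completely_representable.
Qed.

Theorem mainTheorem6 :
  (* not closed under subalgebras *)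
  (exists (B : algebra) (S : subalg B),
      completely_representable B /\
      ~ completely_representable (sub_algebra S)) /\
  (* not closed under directed unions *)
  (exists (B : algebra) (I : Type) (F : I -> subalg B),
      directed_union_of F /\
      (forall i, completely_representable (sub_algebra (F i))) /\
      ~ completely_representable B) /\
  (* not closed under homomorphic images *)
  (exists (A B : algebra) (h : A -> B),
      is_hom A B h /\ surjective h /\
      completely_representable A /\ ~ completely_representable B) /\
  (* not axiomatisable by a universal theory *)
  ~ (exists T : formula -> Prop,
        (forall f, T f -> universal f) /\
        axiomatises T completely_representable) /\
  (* not axiomatisable by a universal-existential theory *)
  ~ (exists T : formula -> Prop,
        (forall f, T f -> univ_exist f) /\
        axiomatises T completely_representable) /\
  (* not axiomatisable by a positive theory *)
  ~ (exists T : formula -> Prop,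
        (forall f, T f -> positive f) /\
        axiomatises T completely_representable).
Proof.
  split; [exact not_closed_under_subalgebras |].
  split; [exact not_closed_under_directed_unions |].
  split; [exact not_closed_under_homomorphic_images |].
  split; [| split]; intros [T [HT Hax]].
  - destruct not_closed_under_subalgebras as [B [S [HB HS]]].
    apply HS, Hax, (models_subalgebra (S := S) HT), Hax, HB.
  - destruct not_closed_under_directed_unions as [B [I [F [HF [HFi HB]]]]].
    apply HB, Hax, (models_directed_union HF HT); intro i; apply Hax, HFi.
  - destruct not_closed_under_homomorphic_images as [A [B [h [Hh [Hs [HA HB]]]]]].
    apply HB, Hax, (models_surjective_image Hh Hs HT), Hax, HA.
Qed.
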